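(* For all positive integers $r$ and $N$ there exists a partition $\mathbb N=A_1\cup A_2\cup\cdots\cup A_r$ into pairwise disjoint sets such that (i) $A_i-n$ is a central set for every $1\le i\le r$ and every $1\le n\le N$; and (ii) for every $n>N$, exactly one of the sets $A_1-n,A_2-n,\dots,A_r-n$ is a central set.
   Context: $\mathbb N=\{0,1,2,\dots\}$; for $A\subseteq\mathbb N$ and $n\in\mathbb N$, $A-n=\{m\in\mathbb N: m+n\in A\}$. $\beta\mathbb N$ is the set of ultrafilters on $\mathbb N$ with addition $A\in p+q$ iff $\{n:A-n\in p\}\in q$; a minimal idempotent is a non-principal ultrafilter $p$ with $p+p=p$ lying in the smallest two-sided ideal of $\beta\mathbb N$; a set is central if it belongs to some minimal idempotent. *)

From Stdlib Require Import Arith.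

Definition nset := nat -> Prop.

Definition shift (A : nset) (n : nat) : nset := fun m => A (m + n).

Definition is_ultrafilter (p : nset -> Prop) : Prop :=
  p (fun _ => True) /\
  ~ p (fun _ => False) /\
  (forall A B : nset, p A -> (forall m, A m -> B m) -> p B) /\
  (forall A B : nset, p A -> p B -> p (fun m => A m /\ B m)) /\
  (forall A : nset, p A \/ p (fun m => ~ A m)).

Definition nonprincipal (p : nset -> Prop) : Prop :=
  forall n : nat, ~ p (fun m => m = n).

Definition uadd (p q : nset -> Prop) : nset -> Prop :=
  fun A => q (fun n => p (shift A n)).

Definition ueq (p q : nset -> Prop) : Prop := forall A : nset, p A <-> q A.

Definition two_sided_ideal (I : (nset -> Prop) -> Prop) : Prop :=
  (exists p, is_ultrafilter p /\ I p) /\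
  (forall p, I p -> is_ultrafilter p) /\
  (forall p q, I p -> is_ultrafilter q -> I (uadd p q) /\ I (uadd q p)).

Definition in_K (p : nset -> Prop) : Prop :=
  is_ultrafilter p /\ forall I, two_sided_ideal I -> I p.

Definition minimal_idempotent (p : nset -> Prop) : Prop :=
  is_ultrafilter p /\ nonprincipal p /\ ueq (uadd p p) p /\ in_K p.

Definition central (A : nset) : Prop :=
  exists p, minimal_idempotent p /\ p A.

(* Write v for the 2-adic valuation and colour y in N as follows: if
   s := y mod 2^N lies in [1, N], give y the colour 1 + (v (y - s) mod r);
   otherwise give it colour 1.  For 1 <= n <= N and every colour i, the set
   {x in 2^N N : x > 0, v x = i - 1 mod r} lies in A_i - n; it belongs to a
   minimal idempotent because it is 2-adically open and meets every 2^j N.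
   For n > N the colour of x + n is constant on some 2^J N; since every
   idempotent contains 2^J N, exactly one A_i - n is central. *)

From Stdlib Require Import Arith Lia Classical FunctionalExtensionality PropExtensionality.
From mathcomp Require classical_sets boolp.

Lemma zorn_pred (X : Type) (P : X -> Prop) (R : X -> X -> Prop) (x0 : X) :
  P x0 ->
  (forall x, R x x) -> (forall x y z, R x y -> R y z -> R x z) ->
  (forall A : X -> Prop, (forall x, A x -> P x) ->
     (forall x y, A x -> A y -> R x y \/ R y x) -> (exists x, A x) ->
     exists u, P u /\ forall x, A x -> R x u) ->
  exists m, P m /\ forall x, P x -> R m x -> R x m.
Proof.
  intros Hx0 Hrefl Htrans Hchain.
  destruct (@classical_sets.ZL_preorder {x | P x} (exist _ x0 Hx0)
              (fun a b => boolp.asbool (R (proj1_sig a) (proj1_sig b))))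
    as [[m Hm] Hmax].
  - intro a. apply boolp.asboolT, Hrefl.
  - intros a b c Hab Hbc. apply boolp.asboolT.
    apply boolp.asboolW in Hab, Hbc. eauto.
  - intros A HA. destruct (classic (exists a, A a)) as [[a0 Ha0]|Hempty].
    + destruct (Hchain (fun x => exists a, A a /\ proj1_sig a = x)) as [u [Pu Hu]].
      * intros x [a [_ <-]]. apply proj2_sig.
      * intros x y [a [Ha <-]] [b [Hb <-]].
        destruct (HA a b Ha Hb); [left|right]; apply boolp.asboolW; assumption.
      * eauto.
      * exists (exist _ u Pu). intros a Ha. apply boolp.asboolT, Hu. eauto.
    + exists (exist _ x0 Hx0). intros a Ha. exfalso. eauto.
  - exists m. split; [exact Hm|]. intros x Px Rmx.
    apply boolp.asboolW, (Hmax (exist _ x Px)), boolp.asboolT, Rmx.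
Qed.

Definition uf := nset -> Prop.

Section Ultrafilter.
Variable p : uf.
Hypothesis Hp : is_ultrafilter p.

Lemma uf_top : p (fun _ => True). Proof. apply Hp. Qed.
Lemma uf_bot : ~ p (fun _ => False). Proof. apply Hp. Qed.
Lemma uf_up A B : p A -> (forall m, A m -> B m) -> p B. Proof. apply Hp. Qed.
Lemma uf_cap A B : p A -> p B -> p (fun m => A m /\ B m). Proof. apply Hp. Qed.
Lemma uf_comp A : p A \/ p (fun m => ~ A m). Proof. apply Hp. Qed.

Lemma uf_ne A : p A -> exists m, A m.
Proof.
  intro HA. apply NNPP. intro Hempty. apply uf_bot. apply (uf_up _ _ HA).
  intros m Hm. apply Hempty. eauto.
Qed.

Lemma uf_compl A : ~ p A -> p (fun m => ~ A m).
Proof. intro H. destruct (uf_comp A); tauto. Qed.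

Lemma uf_not A : p A -> p (fun m => ~ A m) -> False.
Proof. intros H1 H2. destruct (uf_ne _ (uf_cap _ _ H1 H2)) as [m [? ?]]. tauto. Qed.
End Ultrafilter.

Lemma uf_eq p q : is_ultrafilter p -> is_ultrafilter q -> (forall A, p A -> q A) -> p = q.
Proof.
  intros Hp Hq H. apply functional_extensionality. intro A.
  apply propositional_extensionality. split; [apply H|].
  intro HA. apply NNPP. intro HnA. apply (uf_not q Hq A HA), H, uf_compl; assumption.
Qed.

Record filter (F : uf) : Prop := {
  filter_top : F (fun _ => True);
  filter_ne : forall X, F X -> exists m, X m;
  filter_up : forall X Y, F X -> (forall m, X m -> Y m) -> F Y;
  filter_cap : forall X Y, F X -> F Y -> F (fun m => X m /\ Y m) }.

(* A filter that no filter properly extends is an ultrafilter: if neither A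
   nor its complement were in F, adjoining A would give a larger filter. *)
Lemma maximal_filter_ultra F :
  filter F ->
  (forall G, filter G -> (forall X, F X -> G X) -> forall X, G X -> F X) ->
  is_ultrafilter F.
Proof.
  intros [Htop Hne Hup Hcap] Hmax.
  split; [exact Htop|split; [|split; [exact Hup|split; [exact Hcap|]]]].
  - intro Hbot. destruct (Hne _ Hbot) as [m []].
  - intro A. destruct (classic (F (fun m => ~ A m))) as [HnA|HnA]; [right; exact HnA|left].
    set (G := fun X => exists Y, F Y /\ forall m, A m -> Y m -> X m).
    assert (HG : filter G).
    { constructor.
      - exists (fun _ => True). auto.
      - intros X [Y [HY HYX]]. apply NNPP. intro Hempty. apply HnA.
        apply (Hup _ _ HY). intros m Hm HAm. apply Hempty. eauto.
      - intros X Y [Z [HZ HZX]] HXY. exists Z. auto.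
      - intros X Y [Z1 [HZ1 H1]] [Z2 [HZ2 H2]]. exists (fun m => Z1 m /\ Z2 m).
        split; [auto|]. intros m Hm [? ?]. auto. }
    apply (Hmax G HG).
    + intros X HX. exists X. auto.
    + exists (fun _ => True). auto.
Qed.

Lemma chain_union_filter (A : uf -> Prop) :
  (forall F, A F -> filter F) ->
  (forall F G, A F -> A G -> (forall X, F X -> G X) \/ (forall X, G X -> F X)) ->
  (exists F, A F) ->
  filter (fun X => exists F, A F /\ F X).
Proof.
  intros HA Hchain [F0 HF0]. constructor.
  - exists F0. split; [exact HF0|apply filter_top, HA, HF0].
  - intros X [F [HF HX]]. exact (filter_ne _ (HA F HF) X HX).
  - intros X Y [F [HF HX]] HXY. exists F. split; [exact HF|].
    exact (filter_up _ (HA F HF) X Y HX HXY).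
  - intros X Y [F [HF HX]] [G [HG HY]].
    destruct (Hchain F G HF HG) as [HFG|HGF].
    + exists G. split; [exact HG|]. apply (filter_cap _ (HA G HG)); auto.
    + exists F. split; [exact HF|]. apply (filter_cap _ (HA F HF)); auto.
Qed.

Lemma filter_extends F : filter F -> exists p, is_ultrafilter p /\ forall X, F X -> p X.
Proof.
  intro HF.
  destruct (zorn_pred uf (fun G => filter G /\ forall X, F X -> G X)
              (fun G H => forall X, G X -> H X) F) as [M [[HM HFM] Hmax]].
  - auto.
  - auto.
  - auto.
  - intros A HA Hch Hne. exists (fun X => exists G, A G /\ G X). split.
    + split.
      * apply chain_union_filter; [intros G HG; apply HA, HG|exact Hch|exact Hne].
      * destruct Hne as [G HG]. intros X HX. exists G. split; [exact HG|apply HA; auto].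
    + intros G HG X HX. eauto.
  - exists M. split; [|exact HFM]. apply maximal_filter_ultra; [exact HM|].
    intros G HG HMG. apply Hmax; [split|]; auto.
Qed.

Lemma generated_filter (I : Type) (P : I -> Prop) (B : I -> nset) :
  (exists i, P i) ->
  (forall i j, P i -> P j -> exists k, P k /\ forall m, B k m -> B i m /\ B j m) ->
  (forall i, P i -> exists m, B i m) ->
  filter (fun X => exists i, P i /\ forall m, B i m -> X m).
Proof.
  intros [i0 Hi0] Hdir Hne. constructor.
  - exists i0. auto.
  - intros X [i [Hi HiX]]. destruct (Hne i Hi) as [m Hm]. eauto.
  - intros X Y [i [Hi HiX]] HXY. exists i. auto.
  - intros X Y [i [Hi HiX]] [j [Hj HjY]]. destruct (Hdir i j Hi Hj) as [k [Hk Hkij]].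
    exists k. split; [exact Hk|]. intros m Hm. destruct (Hkij m Hm). auto.
Qed.

Lemma ultrafilter_lemma (I : Type) (P : I -> Prop) (B : I -> nset) :
  (exists i, P i) ->
  (forall i j, P i -> P j -> exists k, P k /\ forall m, B k m -> B i m /\ B j m) ->
  (forall i, P i -> exists m, B i m) ->
  exists p, is_ultrafilter p /\ forall i, P i -> p (B i).
Proof.
  intros Hex Hdir Hne.
  destruct (filter_extends _ (generated_filter I P B Hex Hdir Hne)) as [p [Hp HBp]].
  exists p. split; [exact Hp|]. intros i Hi. apply HBp. exists i. auto.
Qed.

Lemma shift_shift A n m : shift (shift A n) m = shift A (m + n).
Proof. apply functional_extensionality. intro k. unfold shift. f_equal. lia. Qed.

Lemma uadd_ultra p q : is_ultrafilter p -> is_ultrafilter q -> is_ultrafilter (uadd p q).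
Proof.
  intros Hp Hq. unfold uadd. split; [|split; [|split; [|split]]].
  - apply (uf_up q Hq _ _ (uf_top q Hq)). intros. apply (uf_top p Hp).
  - intro H. apply (uf_bot q Hq). apply (uf_up q Hq _ _ H). intros n Hn. apply (uf_bot p Hp Hn).
  - intros A B HA HAB. apply (uf_up q Hq _ _ HA). intros n Hn. apply (uf_up p Hp _ _ Hn).
    unfold shift. intros m. apply HAB.
  - intros A B HA HB. apply (uf_up q Hq _ _ (uf_cap q Hq _ _ HA HB)).
    intros n [H1 H2]. apply (uf_cap p Hp _ _ H1 H2).
  - intro A. destruct (uf_comp q Hq (fun n => p (shift A n))) as [H|H]; [left; exact H|right].
    apply (uf_up q Hq _ _ H). intros n Hn. apply (uf_compl p Hp). exact Hn.
Qed.

Lemma uadd_assoc p q s : uadd (uadd p q) s = uadd p (uadd q s).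
Proof.
  apply functional_extensionality. intro A. unfold uadd. f_equal.
  apply functional_extensionality. intro n. f_equal.
  apply functional_extensionality. intro m. rewrite shift_shift. reflexivity.
Qed.

Definition principal (n : nat) : uf := fun A => A n.

Lemma principal_ultra n : is_ultrafilter (principal n).
Proof. unfold principal. split; [|split; [|split; [|split]]]; auto. intro A. apply classic. Qed.

Definition uset := uf -> Prop.

Definition common (C : uset) (A : nset) : Prop := forall q, C q -> q A.

(* C is closed in the Stone topology: every ultrafilter containing all the
   sets common to C belongs to C. *)
Definition closed (C : uset) : Prop :=
  forall p, is_ultrafilter p -> (forall A, common C A -> p A) -> C p.

Record nonempty_closed (C : uset) : Prop := {
  nc_closed : closed C;
  nc_inhabited : exists q, C q;
  nc_ultra : forall q, C q -> is_ultrafilter q }.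

Definition chain (A : uset -> Prop) : Prop :=
  forall C D, A C -> A D -> (forall q, C q -> D q) \/ (forall q, D q -> C q).

Definition inter (A : uset -> Prop) : uset := fun p => forall C, A C -> C p.

(* Compactness of beta N: a nonempty chain of nonempty closed sets has a
   nonempty closed intersection. *)
Lemma chain_inter_nonempty_closed (A : uset -> Prop) :
  (forall C, A C -> nonempty_closed C) -> chain A -> (exists C, A C) ->
  nonempty_closed (inter A).
Proof.
  intros HA Hch [C0 HC0]. constructor.
  - intros p Hp Hc C HC. apply (nc_closed _ (HA C HC) p Hp).
    intros X HX. apply Hc. intros q Hq. apply HX, Hq, HC.
  - destruct (ultrafilter_lemma nset (fun X => exists C, A C /\ common C X) (fun X => X))
      as [p [Hp HpB]].
    + exists (fun _ => True), C0. split; [exact HC0|].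
      intros q Hq. apply uf_top, (nc_ultra _ (HA C0 HC0)), Hq.
    + intros X Y [C [HC HX]] [D [HD HY]]. exists (fun m => X m /\ Y m). split; [|auto].
      (* the larger of C and D still has X /\ Y in common *)
      destruct (Hch C D HC HD) as [HCD|HDC].
      * exists C. split; [exact HC|]. intros q Hq.
        apply (uf_cap q (nc_ultra _ (HA C HC) q Hq)); [apply HX, Hq|apply HY, HCD, Hq].
      * exists D. split; [exact HD|]. intros q Hq.
        apply (uf_cap q (nc_ultra _ (HA D HD) q Hq)); [apply HX, HDC, Hq|apply HY, Hq].
    + intros X [C [HC HX]]. destruct (nc_inhabited _ (HA C HC)) as [q Hq].
      apply (uf_ne q (nc_ultra _ (HA C HC) q Hq)), HX, Hq.
    + exists p. intros C HC. apply (nc_closed _ (HA C HC) p Hp).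
      intros X HX. apply HpB. eauto.
  - intros q Hq. apply (nc_ultra _ (HA C0 HC0)), Hq, HC0.
Qed.

Lemma minimal_closed (Q : uset -> Prop) (C0 : uset) :
  (forall A, (forall C, A C -> nonempty_closed C /\ Q C) -> chain A -> (exists C, A C) ->
     Q (inter A)) ->
  nonempty_closed C0 -> Q C0 ->
  exists M, nonempty_closed M /\ Q M /\
    forall C, nonempty_closed C -> Q C -> (forall q, C q -> M q) -> forall q, M q -> C q.
Proof.
  intros HQ HC0 HQC0.
  destruct (zorn_pred uset (fun C => nonempty_closed C /\ Q C)
              (fun C D => forall q, D q -> C q) C0) as [M [[HM HQM] Hmin]].
  - auto.
  - auto.
  - auto.
  - intros A HA Hch Hne.
    assert (HchA : chain A).
    { intros C D HC HD. destruct (Hch C D HC HD); auto. }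
    exists (inter A). split.
    + split; [apply chain_inter_nonempty_closed|apply HQ]; auto.
      intros C HC. apply HA, HC.
    + intros C HC q Hq. apply Hq, HC.
  - exists M. split; [exact HM|split; [exact HQM|]].
    intros C HC HQC HCM. apply Hmin; auto.
Qed.

Definition translate (e : uf) (T : uset) : uset := fun p => exists t, T t /\ p = uadd e t.

(* [hat e A] is the set of n with A - n in e, so that A is in e + t exactly
   when [hat e A] is in t. *)
Definition hat (e : uf) (A : nset) : nset := fun n => e (shift A n).

(* Left translation t |-> e + t is continuous, so it maps closed sets to
   closed sets.  An ultrafilter p adherent to e + T is e + t for an
   ultrafilter t containing every set D common to T and every hat e A with
   A in p. *)
Lemma translate_closed (e : uf) (T : uset) :
  is_ultrafilter e -> closed T -> (forall t, T t -> is_ultrafilter t) ->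
  closed (translate e T).
Proof.
  intros He HT HTu p Hp Hc.
  assert (Hcommon_top : common T (fun _ => True)).
  { intros q Hq. apply uf_top, HTu, Hq. }
  destruct (ultrafilter_lemma (nset * nset)
              (fun DA => common T (fst DA) /\ p (snd DA))
              (fun DA n => fst DA n /\ hat e (snd DA) n)) as [t [Ht HtB]].
  - exists ((fun _ => True), (fun _ => True)). split; [exact Hcommon_top|apply uf_top, Hp].
  - intros [D1 A1] [D2 A2] [HD1 HA1] [HD2 HA2].
    exists ((fun n => D1 n /\ D2 n), (fun m => A1 m /\ A2 m)). simpl in *. split.
    + split.
      * intros q Hq. apply (uf_cap q (HTu q Hq)); [apply HD1|apply HD2]; exact Hq.
      * apply uf_cap; assumption.
    + unfold hat. intros n [[H1 H2] Hn].
      split; split; try assumption; apply (uf_up e He _ _ Hn); unfold shift; tauto.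
  - (* if D meets no hat e A, then the complement of A is common to e + T *)
    intros [D A] [HD HA]. simpl in *. apply NNPP. intro Hempty.
    apply (uf_not p Hp A HA), Hc. intros q [s [Hs ->]]. unfold uadd.
    apply (uf_up s (HTu s Hs) D); [apply HD, Hs|].
    intros n Hn. apply (uf_compl e He). intro HeA. apply Hempty. exists n. split; assumption.
  - assert (HTt : T t).
    { apply HT; [exact Ht|]. intros D HD.
      apply (uf_up t Ht _ _ (HtB (D, fun _ => True) (conj HD (uf_top p Hp)))).
      intros n [Hn _]. exact Hn. }
    exists t. split; [exact HTt|]. apply uf_eq; [exact Hp|apply uadd_ultra; assumption|].
    intros A HA. unfold uadd.
    apply (uf_up t Ht _ _ (HtB ((fun _ => True), A) (conj Hcommon_top HA))).
    intros n [_ Hn]. exact Hn.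
Qed.

(* The stabiliser {t in T | e + t = e} of e is closed, as the preimage of
   the point e under the continuous map t |-> e + t. *)
Lemma stabilizer_closed (e : uf) (T : uset) :
  is_ultrafilter e -> closed T -> (forall t, T t -> is_ultrafilter t) ->
  closed (fun t => T t /\ uadd e t = e).
Proof.
  intros He HT HTu p Hp Hc.
  assert (HTp : T p).
  { apply HT; [exact Hp|]. intros A HA. apply Hc. intros q [Hq _]. apply HA, Hq. }
  split; [exact HTp|]. symmetry. apply uf_eq; [exact He|apply uadd_ultra; assumption|].
  intros A HA. unfold uadd. apply Hc. intros q [_ Hqe]. rewrite <- Hqe in HA. exact HA.
Qed.

Definition semigroup (S : uset) : Prop := forall a b, S a -> S b -> S (uadd a b).

Lemma translate_subsemigroup (T : uset) x :
  closed T -> (forall t, T t -> is_ultrafilter t) -> semigroup T -> T x ->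
  nonempty_closed (translate x T) /\ semigroup (translate x T) /\
  (forall q, translate x T q -> T q).
Proof.
  intros HT HTu HTsg Hx.
  assert (Hxu : is_ultrafilter x) by exact (HTu x Hx).
  split; [constructor|split].
  - apply translate_closed; assumption.
  - exists (uadd x x), x. auto.
  - intros p [t [Ht ->]]. apply uadd_ultra; [exact Hxu|apply HTu, Ht].
  - intros a b [t [Ht ->]] [s [Hs ->]]. exists (uadd t (uadd x s)).
    split; [apply HTsg; [exact Ht|apply HTsg; assumption]|].
    rewrite !uadd_assoc. reflexivity.
  - intros q [t [Ht ->]]. apply HTsg; assumption.
Qed.

(* Take a minimal nonempty closed subsemigroup M of S and e in M;
   by minimality e + M = M, so e = e + t for some t in M, and then the
   stabiliser of e in M is nonempty, hence equal to M, so e + e = e. *)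
Lemma ellis (S : uset) : nonempty_closed S -> semigroup S -> exists e, S e /\ uadd e e = e.
Proof.
  intros HS HSg.
  destruct (minimal_closed (fun C => semigroup C /\ forall q, C q -> S q) S)
    as [M [HM [[HMsg HMS] Hmin]]].
  - intros A HA Hch [C0 HC0]. split.
    + intros a b Ha Hb C HC. apply (proj1 (proj2 (HA C HC))); [apply Ha|apply Hb]; exact HC.
    + intros q Hq. apply (proj2 (proj2 (HA C0 HC0))), Hq, HC0.
  - exact HS.
  - split; auto.
  - destruct (nc_inhabited _ HM) as [e He].
    assert (Heu : is_ultrafilter e) by exact (nc_ultra _ HM e He).
    destruct (translate_subsemigroup M e (nc_closed _ HM) (nc_ultra _ HM) HMsg He)
      as [Htr [Htrsg HtrM]].
    assert (Hte : translate e M e).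
    { apply (Hmin (translate e M)); [exact Htr| |exact HtrM|exact He].
      split; [exact Htrsg|]. intros q Hq. apply HMS, HtrM, Hq. }
    destruct Hte as [t [Ht Het]].
    assert (Hstab : M e /\ uadd e e = e).
    { apply (Hmin (fun s => M s /\ uadd e s = e)); [| |intros q [Hq _]; exact Hq|exact He].
      - constructor.
        + apply stabilizer_closed; [exact Heu|apply (nc_closed _ HM)|apply (nc_ultra _ HM)].
        + exists t. auto.
        + intros q [Hq _]. apply (nc_ultra _ HM), Hq.
      - split.
        + intros a b [Ha Hae] [Hb Hbe]. split; [apply HMsg; assumption|].
          rewrite <- uadd_assoc, Hae. exact Hbe.
        + intros q [Hq _]. apply HMS, Hq. }
    exists e. split; [apply HMS, He|apply Hstab].
Qed.

Lemma full_closed : closed is_ultrafilter.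
Proof. intros p Hp _. exact Hp. Qed.

Lemma full_semigroup : semigroup is_ultrafilter.
Proof. intros a b Ha Hb. apply uadd_ultra; assumption. Qed.

Definition right_ideal (C : uset) : Prop :=
  forall q s, C q -> is_ultrafilter s -> C (uadd q s).

(* The smallest ideal K is nonempty: every member e of a minimal closed right
   ideal M lies in each two-sided ideal I, since for q in I the closed right
   ideal f + beta N with f = e + q lies in M, hence contains e, and lies in I. *)
Lemma K_nonempty : exists e, in_K e.
Proof.
  destruct (minimal_closed right_ideal is_ultrafilter) as [M [HM [HMr Hmin]]].
  - intros A HA _ _ q s Hq Hs C HC. apply (proj2 (HA C HC)); [apply Hq, HC|exact Hs].
  - constructor.
    + exact full_closed.
    + exists (principal 0). apply principal_ultra.
    + auto.
  - intros q s Hq Hs. apply full_semigroup; assumption.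
  - destruct (nc_inhabited _ HM) as [e He].
    assert (Heu : is_ultrafilter e) by exact (nc_ultra _ HM e He).
    exists e. split; [exact Heu|]. intros I [[q [Hq HIq]] [HIu HI]].
    set (f := uadd e q).
    assert (HfM : M f) by (apply HMr; assumption).
    assert (Hfu : is_ultrafilter f) by exact (nc_ultra _ HM f HfM).
    assert (HfI : I f) by exact (proj2 (HI q e HIq Heu)).
    assert (Hef : translate f is_ultrafilter e).
    { destruct (translate_subsemigroup is_ultrafilter f full_closed (fun t Ht => Ht)
                  full_semigroup Hfu) as [Htr _].
      apply (Hmin (translate f is_ultrafilter)); [exact Htr| | |exact He].
      - intros p s [t [Ht ->]] Hs. exists (uadd t s).
        split; [apply uadd_ultra; assumption|apply uadd_assoc].
      - intros p [t [Ht ->]]. apply HMr; assumption. }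
    destruct Hef as [t [Ht Het]]. rewrite Het. exact (proj1 (HI f t HfI Ht)).
Qed.

Lemma K_right_ideal p s : in_K p -> is_ultrafilter s -> in_K (uadd p s).
Proof.
  intros [Hp HK] Hs. split; [apply uadd_ultra; assumption|].
  intros I HI. exact (proj1 (proj2 (proj2 HI) p s (HK I HI) Hs)).
Qed.

(* A closed subsemigroup T meeting K contains an idempotent of K: apply the
   Ellis-Numakura lemma to x + T, which lies in T and in K. *)
Lemma K_idempotent_in (T : uset) x :
  closed T -> (forall t, T t -> is_ultrafilter t) -> semigroup T -> T x -> in_K x ->
  exists u, T u /\ in_K u /\ uadd u u = u.
Proof.
  intros HT HTu HTsg Hx HxK.
  destruct (translate_subsemigroup T x HT HTu HTsg Hx) as [Htr [Htrsg HtrT]].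
  destruct (ellis (translate x T) Htr Htrsg) as [u [Hu Huu]].
  exists u. split; [apply HtrT, Hu|split; [|exact Huu]].
  destruct Hu as [t [Ht ->]]. apply K_right_ideal; [exact HxK|apply HTu, Ht].
Qed.

Lemma K_idempotent : exists u, in_K u /\ is_ultrafilter u /\ uadd u u = u.
Proof.
  destruct K_nonempty as [e He].
  destruct (K_idempotent_in is_ultrafilter e full_closed (fun t Ht => Ht) full_semigroup
              (proj1 He) He) as [u [Hu [HuK Huu]]].
  exists u. auto.
Qed.

Lemma residue_class p k : is_ultrafilter p -> 0 < k -> exists rho, p (fun m => m mod k = rho).
Proof.
  intros Hp Hk. apply NNPP. intro Hnone.
  assert (Hge : forall t, t <= k -> p (fun m => t <= m mod k)).
  { induction t as [|t IH]; intro Htk.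
    - apply (uf_up p Hp _ _ (uf_top p Hp)). intros; lia.
    - assert (Hnt : p (fun m => ~ m mod k = t)).
      { apply uf_compl; [exact Hp|]. intro Ht. apply Hnone. eauto. }
      apply (uf_up p Hp _ _ (uf_cap p Hp _ _ (IH ltac:(lia)) Hnt)). intros m [? ?]. lia. }
  destruct (uf_ne p Hp _ (Hge k (le_n k))) as [m Hm].
  pose proof (Nat.mod_upper_bound m k ltac:(lia)). lia.
Qed.

(* An idempotent contains kN: if it contains the class of rho mod k, then
   rho + rho = rho mod k. *)
Lemma idempotent_multiples p k :
  is_ultrafilter p -> uadd p p = p -> 0 < k -> p (fun m => Nat.divide k m).
Proof.
  intros Hp Hpp Hk. destruct (residue_class p k Hp Hk) as [rho Hr].
  assert (H2 : uadd p p (fun m => m mod k = rho)) by (rewrite Hpp; exact Hr).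
  unfold uadd in H2. apply (uf_up p Hp _ _ H2). intros n Hn.
  destruct (uf_ne p Hp _ (uf_cap p Hp _ _ Hn Hr)) as [m [Hmn Hm]]. unfold shift in Hmn.
  pose proof (Nat.div_mod_eq m k). pose proof (Nat.div_mod_eq (m + n) k).
  exists ((m + n) / k - m / k). rewrite Nat.mul_sub_distr_r. nia.
Qed.

Lemma minimal_idempotent_idempotent q : minimal_idempotent q -> is_ultrafilter q /\ uadd q q = q.
Proof.
  intros [Hq [_ [He _]]]. split; [exact Hq|]. apply functional_extensionality. intro A.
  apply propositional_extensionality. apply He.
Qed.

Lemma pow2_pos e : 0 < 2 ^ e.
Proof. pose proof (Nat.pow_nonzero 2 e). lia. Qed.

Definition pow2_mult (j : nat) : nset := fun m => Nat.divide (2 ^ j) m.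

Lemma pow2_mult_mono j J m : j <= J -> pow2_mult J m -> pow2_mult j m.
Proof.
  intros Hj HJ. apply Nat.divide_trans with (2 ^ J); [|exact HJ].
  exists (2 ^ (J - j)). rewrite <- Nat.pow_add_r. f_equal. lia.
Qed.

Lemma idempotent_pow2_mult u j : is_ultrafilter u -> uadd u u = u -> u (pow2_mult j).
Proof. intros Hu Huu. exact (idempotent_multiples u _ Hu Huu (pow2_pos j)). Qed.

Lemma minimal_idempotent_pow2_mult u j : minimal_idempotent u -> u (pow2_mult j).
Proof.
  intro Hu. destruct (minimal_idempotent_idempotent u Hu).
  apply idempotent_pow2_mult; assumption.
Qed.

Fixpoint vf (f x : nat) : nat :=
  match f with
  | 0 => 0
  | S f' => if Nat.eqb x 0 then 0 else if Nat.even x then S (vf f' (Nat.div2 x)) else 0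
  end.
Definition v (x : nat) : nat := vf x x.

Lemma vf_spec f x : 0 < x -> x <= f -> exists o, Nat.odd o = true /\ x = 2 ^ (vf f x) * o.
Proof.
  revert x. induction f as [|f IH]; intros x H1 H2; [lia|]. simpl.
  destruct (Nat.eqb_spec x 0); [lia|].
  destruct (Nat.even x) eqn:E.
  - apply Nat.even_spec in E. destruct E as [k Hk]. subst x. rewrite Nat.div2_double.
    destruct (IH k) as [o [Ho Hk']]; try lia. exists o. split; [exact Ho|].
    change (2 ^ S (vf f k)) with (2 * 2 ^ (vf f k)). rewrite <- Nat.mul_assoc, <- Hk'. reflexivity.
  - exists x. split; [rewrite <- Nat.negb_even, E; reflexivity|]. simpl. lia.
Qed.

Lemma vf_pow f e o : Nat.odd o = true -> 2 ^ e * o <= f -> vf f (2 ^ e * o) = e.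
Proof.
  revert e. induction f as [|f IH]; intros e Ho Hle.
  - destruct o; [discriminate|]. pose proof (pow2_pos e). nia.
  - pose proof (pow2_pos e). assert (o <> 0) by (intro; subst; discriminate).
    simpl. destruct (Nat.eqb_spec (2 ^ e * o) 0); [nia|].
    destruct e as [|e].
    + rewrite Nat.pow_0_r, Nat.mul_1_l in *. rewrite <- Nat.negb_odd, Ho. reflexivity.
    + change (2 ^ S e) with (2 * 2 ^ e) in *. rewrite <- Nat.mul_assoc in *.
      replace (Nat.even (2 * (2 ^ e * o))) with true
        by (symmetry; apply Nat.even_spec; eexists; reflexivity).
      rewrite Nat.div2_double. f_equal. apply IH; [exact Ho|]. pose proof (pow2_pos e). nia.
Qed.

Lemma v_spec x : 0 < x -> exists o, Nat.odd o = true /\ x = 2 ^ (v x) * o.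
Proof. intro H. apply vf_spec; [exact H|lia]. Qed.

Lemma v_pow e o : Nat.odd o = true -> v (2 ^ e * o) = e.
Proof. intro H. apply vf_pow; [exact H|lia]. Qed.

Lemma v_add d x : 0 < d -> pow2_mult (S (v d)) x -> v (x + d) = v d.
Proof.
  intros Hd [t Ht]. destruct (v_spec d Hd) as [o [Ho Hdo]].
  set (w := v d) in *. rewrite Ht, Hdo.
  change (2 ^ S w) with (2 * 2 ^ w).
  replace (t * (2 * 2 ^ w) + 2 ^ w * o) with (2 ^ w * (o + 2 * t)) by ring.
  apply v_pow. rewrite Nat.odd_add_mul_2. exact Ho.
Qed.

Definition pow2_open (E : nset) : Prop :=
  forall n, E n -> exists J, forall m, pow2_mult J m -> E (m + n).

(* E meets every 2^j N, i.e. 0 is in the 2-adic closure of E. *)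
Definition pow2_dense (E : nset) : Prop := forall j, exists m, pow2_mult j m /\ E m.

Lemma pow2_mult_open j : pow2_open (pow2_mult j).
Proof. intros n Hn. exists j. intros m Hm. apply Nat.divide_add_r; assumption. Qed.

Definition over2 (E : nset) : uset :=
  fun q => is_ultrafilter q /\ (forall j, q (pow2_mult j)) /\ q E.

Lemma open_in_sum (E : nset) x y :
  pow2_open E -> is_ultrafilter x -> (forall j, x (pow2_mult j)) -> is_ultrafilter y -> y E ->
  uadd x y E.
Proof.
  intros HE Hx HxD Hy HyE. unfold uadd. apply (uf_up y Hy _ _ HyE).
  intros n Hn. destruct (HE n Hn) as [J HJ]. exact (uf_up x Hx _ _ (HxD J) HJ).
Qed.

Lemma over2_closed E : closed (over2 E).
Proof.
  intros p Hp Hc. split; [exact Hp|split].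
  - intro j. apply Hc. intros q [_ [Hq _]]. apply Hq.
  - apply Hc. intros q [_ [_ Hq]]. exact Hq.
Qed.

Lemma over2_semigroup E : pow2_open E -> semigroup (over2 E).
Proof.
  intros HE x y [Hx [HxD HxE]] [Hy [HyD HyE]].
  split; [apply uadd_ultra; assumption|split].
  - intro j. apply open_in_sum; [apply pow2_mult_open|auto..].
  - apply open_in_sum; assumption.
Qed.

Lemma over2_inhabited E : pow2_dense E -> exists z, over2 E z.
Proof.
  intro HE.
  destruct (ultrafilter_lemma nat (fun _ => True) (fun j m => pow2_mult j m /\ E m))
    as [z [Hz HzB]].
  - exists 0. exact I.
  - intros i j _ _. exists (max i j). split; [exact I|].
    intros m [Hm HEm]. split; split; try exact HEm; apply (pow2_mult_mono _ (max i j)); try lia; exact Hm.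
  - intros j _. apply HE.
  - exists z. split; [exact Hz|split].
    + intro j. apply (uf_up z Hz _ _ (HzB j I)). intros m [Hm _]. exact Hm.
    + apply (uf_up z Hz _ _ (HzB 0 I)). intros m [_ Hm]. exact Hm.
Qed.

(* Every open dense set of positive integers belongs to a minimal idempotent:
   over2 E is a closed semigroup, it meets K in u0 + z for an idempotent u0
   of K and any z in over2 E, and its idempotents are nonprincipal. *)
Lemma over2_minimal_idempotent E :
  pow2_open E -> pow2_dense E -> (forall m, E m -> 0 < m) ->
  exists u, minimal_idempotent u /\ over2 E u.
Proof.
  intros Hopen Hdense Hpos.
  destruct (over2_inhabited E Hdense) as [z [Hz [HzD HzE]]].
  destruct K_idempotent as [u0 [Hu0K [Hu0 Hu0u]]].
  assert (Hu0D : forall j, u0 (pow2_mult j)) by (intro; apply idempotent_pow2_mult; assumption).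
  destruct (K_idempotent_in (over2 E) (uadd u0 z)) as [u [[Hu [HuD HuE]] [HuK Huu]]].
  - apply over2_closed.
  - intros t [Ht _]. exact Ht.
  - apply over2_semigroup, Hopen.
  - split; [apply uadd_ultra; assumption|split].
    + intro j. apply open_in_sum; [apply pow2_mult_open|auto..].
    + apply open_in_sum; assumption.
  - apply K_right_ideal; assumption.
  - exists u. split; [|split; [exact Hu|split; assumption]].
    split; [exact Hu|split; [|split; [|exact HuK]]].
    + (* u contains positive multiples of 2^(n+1), all different from n *)
      intros n Hn.
      destruct (uf_ne u Hu _ (uf_cap u Hu _ _ (uf_cap u Hu _ _ Hn (HuD (S n))) HuE))
        as [m [[-> Hdiv] HEm]].
      apply Nat.divide_pos_le in Hdiv; [|apply Hpos, HEm].
      pose proof (Nat.pow_gt_lin_r 2 (S n) ltac:(lia)). lia.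
    + rewrite Huu. intro. tauto.
Qed.

Lemma minimal_idempotent_exists : exists u, minimal_idempotent u.
Proof.
  destruct (over2_minimal_idempotent (fun m => 0 < m)) as [u [Hu _]].
  - intros n Hn. exists 0. intros m _. lia.
  - intro j. exists (2 ^ j). split; [exists 1; lia|apply pow2_pos].
  - auto.
  - exists u. exact Hu.
Qed.

Definition val_class (r a : nat) : nset := fun m => 0 < m /\ v m mod r = a.

(* Valuation classes are open (v (m + n) = v n for 2^(v n + 1) | m) and,
   for a < r, dense (they contain 2^(a + r j)). *)
Lemma val_class_open r a : pow2_open (val_class r a).
Proof.
  intros n [Hn Hv]. exists (S (v n)). intros m Hm.
  split; [lia|]. rewrite v_add; assumption.
Qed.

Lemma val_class_dense r a : a < r -> pow2_dense (val_class r a).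
Proof.
  intros Ha j. exists (2 ^ (a + r * j)). split; [|split].
  - apply (pow2_mult_mono _ (a + r * j)); [nia|exists 1; lia].
  - apply pow2_pos.
  - rewrite <- (Nat.mul_1_r (2 ^ _)), v_pow by reflexivity.
    rewrite Nat.mul_comm, Nat.Div0.mod_add. apply Nat.mod_small, Ha.
Qed.

Definition colour (r N y : nat) : nat :=
  if andb (1 <=? y mod 2 ^ N) (y mod 2 ^ N <=? N) then S (v (y - y mod 2 ^ N) mod r) else 1.

Lemma colour_range r N y : 1 <= r -> 1 <= colour r N y <= r.
Proof.
  intro Hr. unfold colour. destruct (andb _ _); [|lia].
  pose proof (Nat.mod_upper_bound (v (y - y mod 2 ^ N)) r ltac:(lia)). lia.
Qed.

Lemma colour_window r N y :
  1 <= y mod 2 ^ N <= N -> colour r N y = S (v (y - y mod 2 ^ N) mod r).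
Proof.
  intro H. unfold colour.
  destruct (Nat.leb_spec 1 (y mod 2 ^ N)), (Nat.leb_spec (y mod 2 ^ N) N); simpl; lia.
Qed.

Lemma colour_outside r N y : ~ 1 <= y mod 2 ^ N <= N -> colour r N y = 1.
Proof.
  intro H. unfold colour.
  destruct (Nat.leb_spec 1 (y mod 2 ^ N)), (Nat.leb_spec (y mod 2 ^ N) N); simpl; lia.
Qed.

Lemma mod_pow2_shift N x n : pow2_mult N x -> (x + n) mod 2 ^ N = n mod 2 ^ N.
Proof. intros [t ->]. rewrite Nat.add_comm. apply Nat.Div0.mod_add. Qed.

Lemma colour_small_shift r N n x a :
  1 <= n <= N -> pow2_mult N x -> val_class r a x -> colour r N (x + n) = S a.
Proof.
  intros Hn Hx [_ Hv].
  assert (Hmod : (x + n) mod 2 ^ N = n).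
  { rewrite mod_pow2_shift by exact Hx. apply Nat.mod_small.
    pose proof (Nat.pow_gt_lin_r 2 N ltac:(lia)). lia. }
  rewrite colour_window by lia. rewrite Hmod, Nat.add_sub, Hv. reflexivity.
Qed.

Lemma colour_large_shift r N n :
  1 <= r -> N < n -> exists g J, 1 <= g <= r /\ forall x, pow2_mult J x -> colour r N (x + n) = g.
Proof.
  intros Hr Hn. set (s := n mod 2 ^ N).
  destruct (classic (1 <= s <= N)) as [Hs|Hs].
  - set (d := n - s). assert (Hd : 0 < d) by (unfold d; lia).
    exists (S (v d mod r)), (N + S (v d)). split.
    + pose proof (Nat.mod_upper_bound (v d) r ltac:(lia)). lia.
    + intros x Hx.
      assert (HxN : pow2_mult N x) by (apply (pow2_mult_mono _ (N + S (v d))); [lia|exact Hx]).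
      rewrite colour_window; rewrite (mod_pow2_shift N x n HxN); fold s; [|exact Hs].
      replace (x + n - s) with (x + d) by (unfold d; lia).
      rewrite v_add; [reflexivity|exact Hd|].
      apply (pow2_mult_mono _ (N + S (v d))); [lia|exact Hx].
  - exists 1, N. split; [lia|]. intros x Hx.
    apply colour_outside. rewrite (mod_pow2_shift N x n Hx). exact Hs.
Qed.

(* For 1 <= n <= N every colour class shifted by n is central: it contains
   2^N N intersected with the valuation class of i - 1. *)
Lemma small_shift_central r N i n :
  1 <= i <= r -> 1 <= n <= N -> central (shift (fun m => colour r N m = i) n).
Proof.
  intros Hi Hn.
  destruct (over2_minimal_idempotent (val_class r (i - 1))) as [u [Hu [Huu [HuD HuC]]]].
  - apply val_class_open.
  - apply val_class_dense. lia.
  - intros m [Hm _]. exact Hm.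
  - exists u. split; [exact Hu|].
    apply (uf_up u Huu _ _ (uf_cap u Huu _ _ (HuD N) HuC)). intros x [Hx HxC].
    unfold shift. rewrite (colour_small_shift r N n x (i - 1) Hn Hx HxC). lia.
Qed.

(* For n > N exactly one colour class shifted by n is central: every minimal
   idempotent contains the 2^J N on which the colour of x + n is constant. *)
Lemma large_shift_central r N n :
  1 <= r -> N < n -> exists! i, 1 <= i <= r /\ central (shift (fun m => colour r N m = i) n).
Proof.
  intros Hr Hn. destruct (colour_large_shift r N n Hr Hn) as [g [J [Hg HJ]]].
  exists g. split.
  - split; [exact Hg|]. destruct minimal_idempotent_exists as [u Hu].
    exists u. split; [exact Hu|].
    apply (uf_up u (proj1 Hu) _ _ (minimal_idempotent_pow2_mult u J Hu)). exact HJ.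
  - intros j [_ [q [Hq Hqj]]].
    destruct (uf_ne q (proj1 Hq) _
                (uf_cap q (proj1 Hq) _ _ (minimal_idempotent_pow2_mult q J Hq) Hqj))
      as [x [Hx Hxj]].
    unfold shift in Hxj. rewrite (HJ x Hx) in Hxj. exact Hxj.
Qed.

Theorem theorem6 (r N : nat) (hr : 1 <= r) (hN : 1 <= N) :
  exists A : nat -> nset,
    (forall m : nat, exists i, 1 <= i <= r /\ A i m) /\
    (forall i j m, 1 <= i <= r -> 1 <= j <= r -> A i m -> A j m -> i = j) /\
    (forall i n, 1 <= i <= r -> 1 <= n <= N -> central (shift (A i) n)) /\
    (forall n, N < n -> exists! i, 1 <= i <= r /\ central (shift (A i) n)).
Proof.
  exists (fun i m => colour r N m = i). split; [|split; [|split]].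
  - intro m. exists (colour r N m). split; [apply colour_range, hr|reflexivity].
  - intros i j m _ _ Hi Hj. congruence.
  - intros i n Hi Hn. apply small_shift_central; assumption.
  - intros n Hn. apply large_shift_central; assumption.
Qed.
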